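(* Assume $G$ is an algebraic torus. Let $(\delta,\delta')$ be an adjacent pair in $\mathsf M_{\mathbb R}\setminus\mathcal H$ separated by $H\in\mathcal H$, $\delta_0$ the point where $[\delta,\delta']$ meets $H$, and $F$ the unique facet of $\delta_0+\boldsymbol\nabla$ parallel to $H$ with $F\cap(\delta+\boldsymbol\nabla)\ne\emptyset$. Then $\mathcal C^F_\delta=\mathcal C_\delta\setminus\mathcal C_{\delta'}$, and hence $\mathcal C_\delta\setminus\mathcal C^F_\delta=\mathcal C_\delta\cap\mathcal C_{\delta'}$.
   Context: $G$ is an algebraic torus over an algebraically closed field of characteristic $0$ with character lattice $\mathsf M$, cocharacter lattice $\mathsf N$. $X$ is a quasi-symmetric representation with weights $\beta_1,\dots,\beta_d$ (for each line $L\subset\mathsf M_{\mathbb R}$, $\sum_{\beta_i\in L}\beta_i=0$); $\boldsymbol\Sigma=\{\sum a_i\beta_i:a_i\in[0,1]\}$ spans $\mathsf M_{\mathbb R}$ and the complement of the linear hyperplanes parallel to facets of $\boldsymbol\Sigma$ is nonempty. $\boldsymbol\nabla=\tfrac12\boldsymbol\Sigma$. $\mathcal H$ = affine hyperplanes $m+B$, $m\in\mathsf M$, $B\cap\boldsymbol\nabla$ a facet of $\boldsymbol\nabla$; adjacent pair: $\delta,\delta'$ avoid $\bigcup\mathcal H$ and exactly one member of $\mathcal H$ meets $[\delta,\delta']$. $\mathcal C_\delta=(\delta+\boldsymbol\nabla)\cap\mathsf M$. For $\chi\in\mathsf M$, $F_\chi(\delta_0)$ is the smallest face of $\delta_0+\boldsymbol\nabla$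 containing $\chi$, and $\mathcal C^F_\delta=\{\chi\in\mathcal C_\delta:\chi\in\partial(\delta_0+\boldsymbol\nabla),\ F_\chi(\delta_0)=F\}$. *)

(* M_R = 'rV[R]_n, M = integral row vectors. *)
From HB Require Import structures.
From mathcomp Require Import all_boot all_order all_algebra.
From mathcomp Require Import all_classical all_reals all_analysis.
Set Implicit Arguments. Unset Strict Implicit. Unset Printing Implicit Defensive.
Import Order.TTheory GRing.Theory Num.Theory.
Import numFieldNormedType.Exports.
Local Open Scope classical_set_scope.
Local Open Scope ring_scope.

Section Defs.
Variables (R : realType) (n : nat).
Notation V := 'rV[R]_n.

Definition in_lattice (x : V) : Prop := exists z : 'rV[int]_n, x = map_mx intr z.

Definition dotv (l x : V) : R := (x *m l^T) 0 0.

Definition translate (t : V) (S : set V) : set V := [set t + y | y in S].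

Definition segment (a b : V) : set V :=
  [set (1 - t) *: a + t *: b | t in `[0, 1]%classic].

Definition convex_set (S : set V) : Prop :=
  forall x y t, S x -> S y -> 0 <= t <= 1 -> S ((1 - t) *: x + t *: y).

Definition is_face (K F : set V) : Prop :=
  F `<=` K /\ convex_set F /\
  forall x y t, K x -> K y -> 0 < t < 1 -> F ((1 - t) *: x + t *: y) -> F x /\ F y.

Definition affdim_ge (F : set V) (k : nat) : Prop :=
  exists p : 'I_k.+1 -> V, (forall i, F (p i)) /\
    row_free (\matrix_(i < k) (p (lift ord0 i) - p ord0)).

Definition is_facet (K F : set V) : Prop :=
  is_face K F /\ affdim_ge F n.-1 /\ ~ affdim_ge F n.

Definition smallest_face (K : set V) (x : V) (F : set V) : Prop :=
  is_face K F /\ F x /\ forall G, is_face K G -> G x -> F `<=` G.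

Definition boundary (K : set V) : set V := closure K `\` interior K.

Definition affine_hyperplane (B : set V) : Prop :=
  exists (l : V) (c : R), l != 0 /\ B = [set x | dotv l x = c].

Definition linear_hyperplane (B : set V) : Prop :=
  exists l : V, l != 0 /\ B = [set x | dotv l x = 0].

(* S is contained in a translate of B (for a facet S and hyperplane B: parallel) *)
Definition parallel (S B : set V) : Prop := exists t : V, S `<=` translate t B.

Variables (d : nat) (beta : 'I_d -> 'rV[int]_n).
Definition betaR (i : 'I_d) : V := map_mx intr (beta i).

Definition quasi_symmetric : Prop :=
  forall v : V, v != 0 -> \sum_(i < d | (betaR i <= v)%MS) betaR i = 0.

Definition Sigma : set V :=
  [set \sum_(i < d) a i *: betaR i | a in [set a : 'I_d -> R | forall i, 0 <= a i <= 1]].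

Definition spans (S : set V) : Prop :=
  forall x : V, exists k (p : 'I_k -> V) (c : 'I_k -> R),
    (forall i, S (p i)) /\ x = \sum_(i < k) c i *: p i.

Definition generic_nonempty : Prop :=
  exists x : V, forall F B, is_facet Sigma F -> linear_hyperplane B -> parallel F B -> ~ B x.

Definition Nabla : set V := [set 2^-1 *: x | x in Sigma].

Definition hypH (B : set V) : Prop :=
  exists (m : V) (B0 : set V), in_lattice m /\ affine_hyperplane B0 /\
    is_facet Nabla (B0 `&` Nabla) /\ B = translate m B0.

Definition avoids_H (x : V) : Prop := forall B, hypH B -> ~ B x.

Definition intersects (A B : set V) : Prop := A `&` B !=set0.

Definition Cset (delta : V) : set V := translate delta Nabla `&` in_lattice.

Definition CFset (delta delta0 : V) (F : set V) : set V :=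
  [set chi | Cset delta chi /\ boundary (translate delta0 Nabla) chi /\
             smallest_face (translate delta0 Nabla) chi F].
End Defs.

Arguments betaR R [n d] beta i.
Arguments quasi_symmetric R [n d] beta.
Arguments Sigma R [n d] beta _.
Arguments generic_nonempty R [n d] beta.
Arguments Nabla R [n d] beta _.
Arguments hypH R [n d] beta B.
Arguments avoids_H R [n d] beta x.
Arguments Cset R [n d] beta delta _.
Arguments CFset R [n d] beta delta delta0 F _.

From Pilot Require Import Defs.
From HB Require Import structures.
From mathcomp Require Import all_boot all_order all_algebra.
From mathcomp Require Import all_classical all_reals all_analysis.
From mathcomp Require Import ring lra zify.
Set Implicit Arguments. Unset Strict Implicit. Unset Printing Implicit Defensive.
Import Order.TTheory GRing.Theory Num.Theory.
Import numFieldNormedType.Exports.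
Local Open Scope classical_set_scope.
Local Open Scope ring_scope.

(* [Nabla] is the zonotope with generators [beta_i / 2]; quasi-symmetry makes it
   centrally symmetric, with support function [h(l) = sum_i max(0, l . beta_i / 2)].
   Farkas' lemma, followed by rotating the normal until it is orthogonal to
   [n - 1] independent generators, shows that every point outside [Nabla], and
   every boundary point together with an outward direction, is detected by a
   facet normal.  If [chi] lies in [delta + Nabla] but not in [delta' + Nabla],
   such a facet of [chi + Nabla] spans a hyperplane of the family [hypH]
   separating [delta] from [delta']; it must be [H], so it passes through
   [delta0] and [chi] lies on the facet of [delta0 + Nabla] parallel to [H] on
   the side of [delta], which is [F]; [F] is then the smallest face containing
   [chi].  Conversely the points of [F] lie strictly beyond [delta' + Nabla] in
   the direction normal to [H]. *)

Section DotProduct.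
Variables (R : realType) (n : nat).
Implicit Types (l x y : 'rV[R]_n).

Lemma dotvE l x : dotv l x = \sum_k x 0 k * l 0 k.
Proof. by rewrite /dotv !mxE; apply: eq_bigr => k _; rewrite mxE. Qed.

Lemma dotvC l x : dotv l x = dotv x l.
Proof. by rewrite !dotvE; apply: eq_bigr => k _; rewrite mulrC. Qed.

Lemma dotvDr l x y : dotv l (x + y) = dotv l x + dotv l y.
Proof. by rewrite !dotvE -big_split; apply: eq_bigr => k _; rewrite mxE mulrDl. Qed.

Lemma dotvZr l a x : dotv l (a *: x) = a * dotv l x.
Proof. by rewrite !dotvE mulr_sumr; apply: eq_bigr => k _; rewrite mxE mulrA. Qed.

Lemma dotvDl l l' x : dotv (l + l') x = dotv l x + dotv l' x.
Proof. by rewrite dotvC dotvDr !(dotvC x). Qed.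

Lemma dotvZl l a x : dotv (a *: l) x = a * dotv l x.
Proof. by rewrite dotvC dotvZr dotvC. Qed.

Lemma dotv0r l : dotv l 0 = 0.
Proof. by rewrite -(scale0r 0) dotvZr mul0r. Qed.

Lemma dotv0l x : dotv 0 x = 0.
Proof. by rewrite dotvC dotv0r. Qed.

Lemma dotvNr l x : dotv l (- x) = - dotv l x.
Proof. by rewrite -scaleN1r dotvZr mulN1r. Qed.

Lemma dotvNl l x : dotv (- l) x = - dotv l x.
Proof. by rewrite dotvC dotvNr dotvC. Qed.

Lemma dotvBr l x y : dotv l (x - y) = dotv l x - dotv l y.
Proof. by rewrite dotvDr dotvNr. Qed.

Lemma dotvBl l l' x : dotv (l - l') x = dotv l x - dotv l' x.
Proof. by rewrite dotvDl dotvNl. Qed.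

Lemma dotv_sumr l (I : finType) (P : pred I) (F : I -> 'rV[R]_n) :
  dotv l (\sum_(i | P i) F i) = \sum_(i | P i) dotv l (F i).
Proof. exact: (big_morph (dotv l) (dotvDr l) (dotv0r l)). Qed.

Lemma dotv_row m (A : 'M[R]_(m, n)) l i : (A *m l^T) i 0 = dotv l (row i A).
Proof. by rewrite /dotv -row_mul [in RHS]mxE. Qed.

Lemma dotv_eq0 l : (dotv l l == 0) = (l == 0).
Proof.
apply/idP/eqP => [|->]; last by rewrite dotv0r.
rewrite dotvE psumr_eq0 => [/allP l0|k _]; last by rewrite -expr2 sqr_ge0.
apply/matrixP => i k; rewrite [i]ord1 mxE.
by have /implyP/(_ isT) := l0 k (mem_index_enum k); rewrite mulf_eq0 orbb => /eqP.
Qed.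

Lemma dotv_gt0 l : l != 0 -> 0 < dotv l l.
Proof.
rewrite -dotv_eq0 lt_def => ->; rewrite dotvE sumr_ge0 // => k _.
by rewrite -expr2 sqr_ge0.
Qed.

(* Fourier-Motzkin: a certificate for the system projected along [u] lifts back. *)
Lemma dotv_project x y u z :
  dotv (y - (dotv y u / dotv x u) *: x) z = dotv y (z - (dotv x z / dotv x u) *: u).
Proof. by rewrite dotvBl dotvBr dotvZl dotvZr (dotvC x z) (dotvC y u) (dotvC y z); ring. Qed.

End DotProduct.

Lemma dotv_row_mx (R : realType) n1 n2 (l : 'rV[R]_(n1 + n2)) a b :
  dotv l (row_mx a b) = dotv (lsubmx l) a + dotv (rsubmx l) b.
Proof.
rewrite !dotvE big_split_ord /=; congr (_ + _); apply: eq_bigr => k _.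
  by rewrite row_mxEl mxE.
by rewrite row_mxEr mxE.
Qed.

Lemma dotv_delta_mx (R : realType) n (l : 'rV[R]_n) i : dotv l (delta_mx 0 i) = l 0 i.
Proof.
rewrite dotvE (bigD1 i) //= big1 ?addr0 => [|k ki]; first by rewrite mxE !eqxx mul1r.
by rewrite mxE (negbTE ki) andbF mul0r.
Qed.

Section Farkas.
Variables (R : realType) (N : nat).
Notation V := 'rV[R]_N.

Definition in_cone m (g : 'I_m -> V) (v : V) : Prop :=
  exists2 c : 'I_m -> R, (forall j, 0 <= c j) & v = \sum_j c j *: g j.

Lemma widen_lift m (k : 'I_m) : widen_ord (leqnSn m) k = lift ord_max k.
Proof. by apply: val_inj; rewrite /= /bump leqNgt ltn_ord. Qed.

Lemma in_cone_snoc m (g : 'I_m.+1 -> V) (c : 'I_m -> R) b v :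
  (forall j, 0 <= c j) -> 0 <= b ->
  v = \sum_j c j *: g (widen_ord (leqnSn m) j) + b *: g ord_max -> in_cone g v.
Proof.
move=> c0 b0 ->.
exists (fun j => if unlift ord_max j is Some k then c k else b).
  by move=> j; case: unlift.
rewrite big_ord_recr /= unlift_none; congr (_ + _); apply: eq_bigr => k _.
by rewrite widen_lift liftK.
Qed.

Lemma in_cone_widen m (g : 'I_m.+1 -> V) v :
  in_cone (g \o widen_ord (leqnSn m)) v -> in_cone g v.
Proof.
by case=> c c0 ->; apply: (in_cone_snoc c0 (lexx 0)); rewrite scale0r addr0.
Qed.

Lemma in_cone_project m (g : 'I_m.+1 -> V) (x v : V) :
  let u := g ord_max in let g' := g \o widen_ord (leqnSn m) in
  (forall j, dotv x (g' j) <= 0) -> 0 < dotv x v -> 0 < dotv x u ->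
  in_cone (fun j => g' j - (dotv x (g' j) / dotv x u) *: u)
          (v - (dotv x v / dotv x u) *: u) ->
  in_cone g v.
Proof.
move=> u g' xg' xv xu [c c0 vE].
apply: (in_cone_snoc (b := (dotv x v - \sum_j c j * dotv x (g' j)) / dotv x u) c0).
  apply: divr_ge0; last exact: ltW.
  rewrite subr_ge0 (le_trans _ (ltW xv)) // sumr_le0 // => j _.
  by rewrite mulr_ge0_le0.
have -> : (dotv x v - \sum_j c j * dotv x (g' j)) / dotv x u =
    dotv x v / dotv x u - \sum_j c j * (dotv x (g' j) / dotv x u).
  by rewrite mulrBl mulr_suml; congr (_ - _); apply: eq_bigr => j _; rewrite mulrA.
move/eqP: vE; rewrite subr_eq => /eqP {1}->.
rewrite (eq_bigr (fun j => c j *: g' j - (c j * (dotv x (g' j) / dotv x u)) *: u)); last first.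
  by move=> j _; rewrite scalerBr scalerA.
by rewrite sumrB -scaler_suml scalerBl -addrA (addrC (- _)).
Qed.

Lemma farkas m (g : 'I_m -> V) (v : V) :
  ~ in_cone g v -> exists l, (forall j, dotv l (g j) <= 0) /\ 0 < dotv l v.
Proof.
elim: m g v => [|m IH] g v ncone.
  have vnz : v != 0.
    by apply: contra_not_neq ncone => ->; exists (fun=> 0) => //; rewrite big_ord0.
  by exists v; split; [case | exact: dotv_gt0].
set u := g ord_max; set g' := g \o widen_ord (leqnSn m).
have [x [xg' xv]] := IH g' v (fun c => ncone (in_cone_widen c)).
have cases_j (P : V -> Prop) : (forall k, P (g' k)) -> P u -> forall j, P (g j).
  move=> Pg' Pu j; case: (unliftP ord_max j) => [k ->|-> //].
  by rewrite -widen_lift; apply: Pg'.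
have [xu|xu] := lerP (dotv x u) 0.
  by exists x; split=> //; apply: (cases_j (fun w => dotv x w <= 0)).
have [y [yg'' yv'']] := IH _ _ (fun c => ncone (in_cone_project xg' xv xu c)).
exists (y - (dotv y u / dotv x u) *: x); rewrite dotv_project; split => //.
apply: (cases_j (fun w => dotv _ w <= 0)) => [k|]; rewrite dotv_project //.
by rewrite mulfV ?gt_eqF // scale1r subrr dotv0r.
Qed.

End Farkas.

Section LinearAlgebra.
Variables (R : realType) (n : nat).
Notation V := 'rV[R]_n.

Definition lin_indep r (e : 'I_r -> V) :=
  forall c : 'I_r -> R, \sum_k c k *: e k = 0 -> forall k, c k = 0.

Lemma rV_submx_sym (u v : V) : u != 0 -> v != 0 -> (v <= u)%MS -> (u <= v)%MS.
Proof.
move=> u0 v0 vu; have := mxrank_leqif_eq vu.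
by rewrite !rank_rV u0 v0 => -[_ /esym /andP[]].
Qed.

Lemma exists_ortho m (e : 'I_m -> V) : (m < n)%N ->
  exists2 u : V, u != 0 & forall k, dotv u (e k) = 0.
Proof.
move=> mn; set K := kermx (\matrix_k e k)^T.
have K0 : K != 0.
  rewrite -mxrank_eq0 mxrank_ker mxrank_tr subn_eq0 -ltnNge.
  exact: leq_ltn_trans (rank_leq_row _) mn.
have /existsP[j Kj] : [exists j, row j K != 0].
  rewrite -negb_forall; apply: contra K0 => /forallP rows0.
  by apply/eqP/row_matrixP => j; rewrite row0; apply/eqP.
exists (row j K) => // k; have : row j K *m (\matrix_k e k)^T = 0.
  by apply/sub_kermxP/row_sub.
move/(congr1 trmx); rewrite trmx_mul trmxK trmx0 => /matrixP/(_ k 0).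
by rewrite dotv_row rowK mxE.
Qed.

Lemma lin_indep_cons r (e : 'I_r -> V) (v w : V) : lin_indep e ->
  (forall k, dotv w (e k) = 0) -> dotv w v != 0 ->
  lin_indep (fun k : 'I_r.+1 => if unlift ord0 k is Some k' then e k' else v).
Proof.
move=> indep_e we wv c; rewrite big_ord_recl unlift_none.
under eq_bigr => k _ do rewrite liftK.
move=> sum0; have c0 : c ord0 = 0.
  move/(congr1 (dotv w)): sum0; rewrite dotv0r dotvDr dotvZr dotv_sumr big1 ?addr0.
    by move/eqP; rewrite mulf_eq0 (negbTE wv) orbF => /eqP.
  by move=> k _; rewrite dotvZr we mulr0.
move: sum0; rewrite c0 scale0r add0r => /indep_e ck0 k.
by case: (unliftP ord0 k) => [k' ->|->].
Qed.

Lemma lin_indep_row_free r (e : 'I_r -> V) : lin_indep e -> row_free (\matrix_k e k).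
Proof.
move=> ie; rewrite -kermx_eq0; apply/eqP/row_matrixP => i; rewrite row0.
have : row i (kermx (\matrix_k e k)) *m (\matrix_k e k) = 0.
  by apply/sub_kermxP/row_sub.
rewrite mulmx_sum_row; under eq_bigr => k _ do rewrite rowK.
by move=> /ie ci0; apply/matrixP => a b; rewrite [a]ord1 ci0 mxE.
Qed.

Lemma hyperplane_eq_normal (l l0 : V) c c0 : l0 != 0 ->
  [set x | dotv l x = c] = [set x | dotv l0 x = c0] -> exists a, l = a *: l0.
Proof.
move=> l00 E; have l0l0 := dotv_gt0 l00.
pose proj w := w - (dotv l0 w / dotv l0 l0) *: l0.
have l0_proj w : dotv l0 (proj w) = 0 by rewrite dotvBr dotvZr divfK ?gt_eqF // subrr.
pose p := (c0 / dotv l0 l0) *: l0.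
have l0p : [set x | dotv l0 x = c0] p by rewrite /= dotvZr divfK ?gt_eqF.
have l_proj w : dotv l (proj w) = 0.
  have : [set x | dotv l0 x = c0] (p + proj w) by rewrite /= dotvDr l0_proj addr0.
  rewrite -E /= dotvDr; move: l0p; rewrite -E /= => ->.
  by rewrite -[RHS]addr0 => /addrI.
exists (dotv l l0 / dotv l0 l0); apply/eqP; rewrite -subr_eq0 -dotv_eq0.
have -> : l - (dotv l l0 / dotv l0 l0) *: l0 = proj l by rewrite /proj (dotvC l0).
by rewrite {1}/proj dotvBl dotvZl l_proj l0_proj mulr0 subrr.
Qed.

Lemma normal_of_affdim (p : 'I_n.-1.+1 -> V) (l l' : V) c c' :
  row_free (\matrix_(i < n.-1) (p (lift ord0 i) - p ord0)) -> l != 0 ->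
  (forall i, dotv l (p i) = c) -> (forall i, dotv l' (p i) = c') ->
  exists a, l' = a *: l.
Proof.
set D := \matrix_(i < n.-1) _ => Dfree l0 lp l'p.
have n0 : (0 < n)%N by case: n l l0 {p D Dfree lp l'p} => // l; rewrite (thinmx0 l) eqxx.
have in_ker (u : V) cu : (forall i, dotv u (p i) = cu) -> (u <= kermx D^T)%MS.
  move=> up; apply/sub_kermxP/trmx_inj; rewrite trmx_mul trmxK trmx0.
  apply/matrixP => i j; rewrite [j]ord1 dotv_row /D rowK dotvBr !up subrr mxE.
  by [].
have rank_ker : \rank (kermx D^T) = 1%N.
  by rewrite mxrank_ker mxrank_tr (eqP Dfree) -{1}(prednK n0) subSnn.
have := mxrank_leqif_eq (in_ker _ _ lp); rewrite rank_ker rank_rV l0.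
case=> _ /esym /andP[_ ker_l].
have [A ->] := submxP (submx_trans (in_ker _ _ l'p) ker_l).
by exists (A 0 0); rewrite {1}(mx11_scalar A) mul_scalar_mx.
Qed.

End LinearAlgebra.

Section ConvexGeometry.
Variables (R : realType) (n : nat).
Notation V := 'rV[R]_n.

Lemma translateP (t : V) (S : set V) x : translate t S x <-> S (x - t).
Proof.
split; first by case=> y Sy <-; rewrite addrAC subrr add0r.
by move=> Sx; exists (x - t) => //; rewrite addrC subrK.
Qed.

Lemma segmentP (a b y : V) :
  segment a b y <-> exists2 t, 0 <= t <= 1 & y = (1 - t) *: a + t *: b.
Proof.
split; first by case=> t tI <-; exists t => //; move: tI; rewrite /= in_itv.
by case=> t tI ->; exists t => //=; rewrite in_itv.
Qed.

Lemma segment_end (a b : V) : segment a b b.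
Proof. by apply/segmentP; exists 1; rewrite ?ler01 ?lexx // subrr scale0r add0r scale1r. Qed.

Lemma segment_shrink (a b z : V) t : segment a b z -> 0 <= t <= 1 ->
  segment a b ((1 - t) *: a + t *: z).
Proof.
case/segmentP=> s /andP[s0 s1] -> /andP[t0 t1]; apply/segmentP; exists (t * s).
  by rewrite mulr_ge0 // mulr_ile1.
by apply/matrixP => i j; rewrite !mxE; ring.
Qed.

Lemma crossing (l a b : V) c : dotv l a <= c -> c < dotv l b ->
  exists2 t, 0 <= t <= 1 & dotv l ((1 - t) *: a + t *: b) = c.
Proof.
move=> la lb; have ab : 0 < dotv l b - dotv l a by rewrite subr_gt0 (le_lt_trans la).
exists ((c - dotv l a) / (dotv l b - dotv l a)).
  apply/andP; split; first by apply: divr_ge0; [rewrite subr_ge0 | exact: ltW].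
  by rewrite ler_pdivrMr // mul1r; lra.
by rewrite dotvDr !dotvZr; field; rewrite gt_eqF.
Qed.

Lemma convex_translate (t : V) S : Defs.convex_set S -> Defs.convex_set (translate t S).
Proof.
move=> cS x y s /translateP Sx /translateP Sy s01; apply/translateP.
have -> : (1 - s) *: x + s *: y - t = (1 - s) *: (x - t) + s *: (y - t).
  by rewrite !scalerBr addrACA -opprD -scalerDl subrK scale1r.
exact: cS.
Qed.

Lemma face_supporting (K : set V) l c : Defs.convex_set K ->
  (forall x, K x -> dotv l x <= c) -> is_face K ([set x | dotv l x = c] `&` K).
Proof.
move=> cK le_c; split; first by move=> x [].
split=> [x y t [/= lx Kx] [/= ly Ky] t01|x y t Kx Ky /andP[t0 t1] [/= lxy _]].
  by split; [rewrite /= dotvDr !dotvZr lx ly; ring | exact: cK].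
have := le_c x Kx; have := le_c y Ky; rewrite dotvDr !dotvZr in lxy => ly lx.
by split; split => //=; nra.
Qed.

(* [x] is an interior point of the segment from [y] to [x + e (x - y)]. *)
Lemma face_extend (K G : set V) (x y : V) e : is_face K G -> 0 < e ->
  K y -> K (x + e *: (x - y)) -> G x -> G y.
Proof.
move=> [_ [_ faceG]] e0 Ky Kz Gx.
have e1 : 0 < 1 + e by lra.
have s01 : 0 < (1 + e)^-1 < 1 by rewrite invr_gt0 e1 /= invf_lt1 //; lra.
have E : (1 - (1 + e)^-1) *: y + (1 + e)^-1 *: (x + e *: (x - y)) = x.
  by apply/matrixP => i j; rewrite !mxE; field; rewrite gt_eqF.
by case: (faceG _ _ _ Ky Kz s01); rewrite ?E.
Qed.

Lemma hyperplane_not_affdim_ge (F : set V) l c : l != 0 ->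
  (forall x, F x -> dotv l x = c) -> ~ affdim_ge F n.
Proof.
move=> l0 Fl [p [pF pfree]].
set D := \matrix_(i < n) (p (lift ord0 i) - p ord0) in pfree.
have Dl : D *m l^T = 0.
  apply/matrixP => i j; rewrite [j]ord1 dotv_row rowK dotvBr !Fl // subrr mxE.
  by [].
have uD : D \in unitmx by rewrite -row_free_unit.
move/eqP: l0; apply; apply: trmx_inj; rewrite trmx0 -(mulKmx uD l^T) Dl.
exact: mulmx0.
Qed.

Lemma supp_point_not_interior (K : set V) (l x : V) c : l != 0 ->
  (forall y, K y -> dotv l y <= c) -> dotv l x = c -> ~ interior K x.
Proof.
move=> l0 Kle lx /nbhs_ballP[e e0 ballK].
have n1 : 0 < `|l| + 1 by have := normr_ge0 l; lra.
pose s := e / (`|l| + 1); have s0 : 0 < s by rewrite divr_gt0.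
have : K (x + s *: l).
  apply: ballK; rewrite -ball_normE /ball_ /= opprD addrA subrr add0r normrN normrZ.
  by rewrite gtr0_norm // /s mulrAC ltr_pdivrMr // mulrDr mulr1 ltrDl.
move/Kle; rewrite dotvDr dotvZr lx; have := dotv_gt0 l0; nra.
Qed.

(* A point in the relative interior of the convex hull of [p 0], ..., [p j]. *)
Fixpoint mid_chain (p : nat -> V) (j : nat) : V :=
  if j is j'.+1 then 2^-1 *: (mid_chain p j' + p j) else p 0%N.

Lemma mid_chainE (p : nat -> V) j :
  mid_chain p j.+1 = (1 - 2^-1) *: mid_chain p j + 2^-1 *: p j.+1.
Proof.
have -> : 1 - 2^-1 = 2^-1 :> R by field.
by rewrite /= -scalerDr.
Qed.

Lemma mid_chain_in (K : set V) (p : nat -> V) j : Defs.convex_set K ->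
  (forall i, (i <= j)%N -> K (p i)) -> K (mid_chain p j).
Proof.
move=> cK; elim: j => [|j IH] Kp; first exact: Kp.
rewrite mid_chainE; apply: cK.
- by apply: IH => i ij; apply/Kp/leqW.
- exact: Kp.
- by rewrite invr_ge0 ler0n invf_le1 // ler1n.
Qed.

Lemma mid_chain_face (K G : set V) (p : nat -> V) j : Defs.convex_set K ->
  (forall i, (i <= j)%N -> K (p i)) -> is_face K G -> G (mid_chain p j) ->
  forall i, (i <= j)%N -> G (p i).
Proof.
move=> cK Kp [_ [_ faceG]]; elim: j Kp => [|j IH] Kp Gj i.
  by rewrite leqn0 => /eqP ->.
have [Gmid Gpj] : G (mid_chain p j) /\ G (p j.+1).
  apply: (faceG _ _ 2^-1).
  - by apply: mid_chain_in => // k kj; apply/Kp/leqW.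
  - exact: Kp.
  - by rewrite invr_gt0 ltr0n invf_lt1 // ltr1n.
  - by rewrite -mid_chainE.
rewrite leq_eqVlt => /orP[/eqP -> //|]; rewrite ltnS.
by apply: IH => // k kj; apply/Kp/leqW.
Qed.

End ConvexGeometry.

Section Zonotope.
Variables (R : realType) (n d : nat) (beta : 'I_d -> 'rV[int]_n).
Notation V := 'rV[R]_n.
Notation Nabla := (Nabla R beta).

Definition halfbeta i : V := 2^-1 *: betaR R beta i.

Definition supp_nabla (l : V) : R := \sum_i Num.max 0 (dotv l (halfbeta i)).

(* The facets of the zonotope [Nabla] are normal to [n - 1] independent generators. *)
Definition facet_normal (l : V) := l != 0 /\
  exists t : 'I_n.-1 -> 'I_d,
    (forall k, dotv l (halfbeta (t k)) = 0) /\ lin_indep (halfbeta \o t).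

Lemma nablaP x : Nabla x <->
  exists2 a : 'I_d -> R, (forall i, 0 <= a i <= 1) & x = \sum_i a i *: halfbeta i.
Proof.
have E a : 2^-1 *: \sum_i a i *: betaR R beta i = \sum_i a i *: halfbeta i.
  by rewrite scaler_sumr; apply: eq_bigr => i _; rewrite !scalerA mulrC.
split; first by case=> _ [a a01 <-] <-; exists a; rewrite // E.
by case=> a a01 ->; exists (\sum_i a i *: betaR R beta i); [exists a | rewrite E].
Qed.

Lemma dotv_le_supp l x : Nabla x -> dotv l x <= supp_nabla l.
Proof.
case/nablaP=> a a01 ->; rewrite dotv_sumr; apply: ler_sum => i _.
rewrite dotvZr; have /andP[a0 a1] := a01 i.
by case: ler0P => lg; [rewrite mulr_ge0_le0 | nra].
Qed.

Lemma convex_nabla : Defs.convex_set Nabla.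
Proof.
move=> x y t /nablaP[a a01 ->] /nablaP[b b01 ->] /andP[t0 t1].
apply/nablaP; exists (fun i => (1 - t) * a i + t * b i).
  by move=> i; have /andP[? ?] := a01 i; have /andP[? ?] := b01 i; apply/andP; nra.
rewrite !scaler_sumr -big_split; apply: eq_bigr => i _ /=.
by rewrite [RHS]scalerDl !scalerA.
Qed.

Lemma supp_nablaZ a l : 0 <= a -> supp_nabla (a *: l) = a * supp_nabla l.
Proof.
move=> a0; rewrite /supp_nabla mulr_sumr; apply: eq_bigr => i _.
rewrite dotvZl; case: (ler0P (dotv l (halfbeta i))) => lg.
  by rewrite mulr0; apply/max_idPl; rewrite mulr_ge0_le0.
by rewrite (max_idPr _) // mulr_ge0 // ltW.
Qed.

Lemma supp_nablaN l : \sum_i halfbeta i = 0 -> supp_nabla (- l) = supp_nabla l.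
Proof.
move=> sum0; have sumN0 : \sum_i - dotv l (halfbeta i) = 0.
  by rewrite sumrN -dotv_sumr sum0 dotv0r oppr0.
apply/eqP; rewrite -subr_eq0 -sumrB -[X in _ == X]sumN0; apply/eqP.
apply: eq_bigr => i _; rewrite dotvNl.
case: (ler0P (dotv l (halfbeta i))) => lg.
  by rewrite (max_idPr _) ?oppr_ge0 // subr0.
by rewrite (max_idPl _) ?oppr_le0 ?ltW // sub0r.
Qed.

Lemma dotv_eq_supp (a : 'I_d -> R) l : (forall i, 0 <= a i <= 1) ->
  (forall i, a i < 1 -> dotv l (halfbeta i) <= 0) ->
  (forall i, 0 < a i -> 0 <= dotv l (halfbeta i)) ->
  dotv l (\sum_i a i *: halfbeta i) = supp_nabla l.
Proof.
move=> a01 a_lt1 a_gt0; rewrite dotv_sumr; apply: eq_bigr => i _; rewrite dotvZr.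
have /andP[a0 a1] := a01 i.
case: (ltrgt0P (dotv l (halfbeta i))) => li; last by rewrite li mulr0.
  suff -> : a i = 1 by rewrite mul1r.
  by apply/le_anti; rewrite a1 leNgt; apply: contraTN li => /a_lt1; rewrite leNgt.
suff -> : a i = 0 by rewrite mul0r.
by apply/le_anti; rewrite a0 andbT leNgt; apply: contraTN li => /a_gt0; rewrite leNgt.
Qed.

Lemma facet_normal_affdim_ge l : facet_normal l ->
  affdim_ge ([set x | dotv l x = supp_nabla l] `&` Nabla) n.-1.
Proof.
case=> _ [t [lt indep_t]].
pose a0 i : R := if 0 < dotv l (halfbeta i) then 1 else 0.
have a0_01 i : 0 <= a0 i <= 1 by rewrite /a0; case: ifP; rewrite ?lexx ?ler01.
pose p0 := \sum_i a0 i *: halfbeta i.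
have lp0 : dotv l p0 = supp_nabla l.
  rewrite dotv_sumr; apply: eq_bigr => i _; rewrite dotvZr /a0.
  by case: ler0P => lg; rewrite ?mul0r ?mul1r // ltNge lg.
have face_p0 : ([set x | dotv l x = supp_nabla l] `&` Nabla) p0.
  by split; last by apply/nablaP; exists a0.
have face_shift j : dotv l (halfbeta j) = 0 ->
    ([set x | dotv l x = supp_nabla l] `&` Nabla) (p0 + halfbeta j).
  move=> lj; split; first by rewrite /= dotvDr lp0 lj addr0.
  apply/nablaP; exists (fun i => a0 i + (i == j)%:R).
    move=> i; case: (eqVneq i j) => [->|_]; last by rewrite addr0.
    by rewrite /a0 lj ltxx add0r lexx ler01.
  rewrite /p0 (bigD1 j) //= [RHS](bigD1 j) //= eqxx scalerDl scale1r addrAC.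
  by congr (_ + _); apply: eq_bigr => i /negbTE ->; rewrite addr0.
exists (fun k => if unlift ord0 k is Some k' then p0 + halfbeta (t k') else p0).
split=> [k|]; first by case: unlift => [k'|]; [exact: face_shift | exact: face_p0].
set D := \matrix_i _.
have -> : D = \matrix_i halfbeta (t i).
  by apply/row_matrixP => i; rewrite !rowK liftK unlift_none addrAC subrr add0r.
exact: lin_indep_row_free.
Qed.

Lemma facet_normal_facet l : facet_normal l ->
  is_facet Nabla ([set x | dotv l x = supp_nabla l] `&` Nabla).
Proof.
move=> fl; split; first by apply: face_supporting convex_nabla _ => x; apply: dotv_le_supp.
split; first exact: facet_normal_affdim_ge.
by apply: (hyperplane_not_affdim_ge (c := supp_nabla l) fl.1) => x [].
Qed.

End Zonotope.

Arguments halfbeta R [n d] beta i.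
Arguments supp_nabla R [n d] beta l.
Arguments facet_normal R [n d] beta l.

Section WeightSums.
Variables (R : realType) (n d : nat) (beta : 'I_d -> 'rV[int]_n).
Notation V := 'rV[R]_n.
Notation bt := (betaR R beta).

Definition line_closed (A : {set 'I_d}) := forall i j,
  i \in A -> bt i != 0 -> bt j != 0 -> (bt j <= bt i)%MS -> j \in A.

Lemma sum_line_closed_eq0 A : quasi_symmetric R beta -> line_closed A ->
  \sum_(i in A) bt i = 0.
Proof.
move=> qs; have [k] := ubnP #|A|; elim: k A => // k IH A cardA clA.
have [/existsP[i /andP[iA bi0]]|/existsPn A0] := boolP [exists i in A, bt i != 0];
  last by apply: big1 => i iA; move: (A0 i); rewrite iA negbK => /eqP.
pose L := [set j | (bt j <= bt i)%MS]%SET.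
rewrite (big_setID L) /=.
have -> : \sum_(j in A :&: L) bt j = 0.
  rewrite -[RHS](qs (bt i) bi0) big_mkcond [RHS]big_mkcond; apply: eq_bigr => j _.
  rewrite finset.in_setI inE; case: (boolP (bt j <= bt i)%MS) => ji; rewrite ?andbF ?andbT //.
  case: (boolP (j \in A)) => // jA; case: (eqVneq (bt j) 0) => [->//|bj0].
  by rewrite (clA i j) in jA.
rewrite add0r; apply: IH; last first.
  move=> a b; rewrite !finset.in_setD !inE => /andP[aL aA] a0 b0 ba.
  rewrite (clA a b) // andbT; apply: contra aL => bi.
  exact: submx_trans (rV_submx_sym a0 b0 ba) bi.
have : (0 < #|A :&: L|)%N.
  by apply/card_gt0P; exists i; rewrite finset.in_setI iA inE submx_refl.
have := subset_leq_card (subsetIl A L); move: cardA; rewrite cardsD; lia.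
Qed.

Lemma sum_halfbeta_eq0 : quasi_symmetric R beta -> \sum_i halfbeta R beta i = 0.
Proof.
move=> qs; rewrite -scaler_sumr.
have -> : \sum_i bt i = \sum_(i in [set: 'I_d]%SET) bt i.
  by apply: eq_bigl => i; rewrite finset.in_setT.
by rewrite sum_line_closed_eq0 ?scaler0 // => i j *; apply: finset.in_setT.
Qed.

Lemma halfbeta_ortho_eq0 (u : V) : spans (Sigma R beta) ->
  (forall i, dotv u (halfbeta R beta i) = 0) -> u = 0.
Proof.
move=> span uortho; apply/eqP; rewrite -dotv_eq0.
have [k [p [c [pS uE]]]] := span u.
rewrite {2}uE dotv_sumr big1 // => i _; rewrite dotvZr.
have [a _ <-] := pS i; rewrite dotv_sumr big1 ?mulr0 // => j _.
have /eqP := uortho j; rewrite dotvZr /halfbeta dotvZr mulf_eq0 invr_eq0 pnatr_eq0 /=.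
by move=> /eqP ->; rewrite mulr0.
Qed.

End WeightSums.

Section FacetNormals.
Variables (R : realType) (n d : nat) (beta : 'I_d -> 'rV[int]_n).
Notation V := 'rV[R]_n.
Notation hb := (halfbeta R beta).
Variables (up lo : 'I_d -> bool).
Hypothesis up_or_lo : forall i, up i || lo i.
Hypothesis hb_ortho_eq0 : forall u : V, (forall i, dotv u (hb i) = 0) -> u = 0.

(* [up i] ([lo i]): the coefficient of [hb i] may still increase (decrease). *)
Definition in_normal_cone (l : V) := forall i,
  (up i -> dotv l (hb i) <= 0) /\ (lo i -> 0 <= dotv l (hb i)).

Definition blocking (w : V) i :=
  (up i && (0 < dotv w (hb i))) || (lo i && (dotv w (hb i) < 0)).

Lemma exists_blocking_dir r (t : 'I_r -> 'I_d) (w : V) : (r.+1 < n)%N ->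
  exists w', [/\ forall k, dotv w' (hb (t k)) = 0, dotv w' w = 0 & exists i, blocking w' i].
Proof.
move=> rn.
have [u u0 u_ortho] :=
  exists_ortho (fun k : 'I_r.+1 => if unlift ord0 k is Some k' then hb (t k') else w) rn.
have ut k : dotv u (hb (t k)) = 0 by have := u_ortho (lift ord0 k); rewrite liftK.
have uw : dotv u w = 0 by have := u_ortho ord0; rewrite unlift_none.
have [/existsP[i bi]|/existsPn nbu] := boolP [exists i, blocking u i].
  by exists u; split => //; exists i.
have [/existsP[i bi]|/existsPn nbNu] := boolP [exists i, blocking (- u) i].
  by exists (- u); split => [k||]; rewrite ?dotvNl ?ut ?uw ?oppr0 //; exists i.
case/eqP: u0; apply: hb_ortho_eq0 => i.
move: (nbu i) (nbNu i) (up_or_lo i); rewrite /blocking dotvNl oppr_gt0 oppr_lt0.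
by case: ltrgt0P; case: (up i); case: (lo i).
Qed.

(* Move [l] along [w] until the first blocking constraint becomes tight. *)
Lemma normal_cone_move l w i0 : in_normal_cone l -> blocking w i0 ->
  exists i s, [/\ dotv w (hb i) != 0, dotv (l + s *: w) (hb i) = 0
                & in_normal_cone (l + s *: w)].
Proof.
move=> nl bi0; pose s i := - dotv l (hb i) / dotv w (hb i).
have w0 j : blocking w j -> dotv w (hb j) != 0.
  by case/orP => /andP[_ wj]; [rewrite gt_eqF | rewrite lt_eqF].
have sE j : dotv w (hb j) != 0 -> s j * dotv w (hb j) = - dotv l (hb j).
  by move=> wj; rewrite divfK.
case: (arg_minP s bi0) => i bi smin.
have s_ge0 : 0 <= s i.
  case/orP: bi => /andP[ui wi]; rewrite /s.
    by rewrite divr_ge0 ?oppr_ge0 ?(nl i).1 // ltW.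
  by rewrite mulr_le0 ?oppr_le0 ?(nl i).2 // invr_le0 ltW.
exists i, (s i); split; first exact: w0.
  by rewrite dotvDl dotvZl sE ?w0 // subrr.
move=> j; rewrite dotvDl dotvZl; split=> hj.
  have [wj|wj] := lerP (dotv w (hb j)) 0; first by have := (nl j).1 hj; nra.
  have bj : blocking w j by rewrite /blocking hj wj.
  by have := smin j bj; have := sE j (w0 j bj); nra.
have [wj|wj] := lerP 0 (dotv w (hb j)); first by have := (nl j).2 hj; nra.
have bj : blocking w j by rewrite /blocking hj wj orbT.
by have := smin j bj; have := sE j (w0 j bj); nra.
Qed.

Lemma refine_step r (t : 'I_r -> 'I_d) (l w : V) : (r < n.-1)%N ->
  in_normal_cone l -> 0 < dotv l w ->
  (forall k, dotv l (hb (t k)) = 0) -> lin_indep (hb \o t) ->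
  exists l' (t' : 'I_r.+1 -> 'I_d), [/\ in_normal_cone l', 0 < dotv l' w,
    forall k, dotv l' (hb (t' k)) = 0 & lin_indep (hb \o t')].
Proof.
move=> rn nl lw lt indep_t.
have [|w' [w't w'w [i0 bi0]]] := exists_blocking_dir t w; first by case: n rn.
have [i [s [w'i l'i nl']]] := normal_cone_move nl bi0.
exists (l + s *: w'), (fun k => if unlift ord0 k is Some k' then t k' else i).
split=> //; first by rewrite dotvDl dotvZl w'w mulr0 addr0.
  move=> k; case: unlift => [k'|] //.
  by rewrite dotvDl dotvZl lt w't mulr0 addr0.
move=> c sum0; apply: (lin_indep_cons indep_t w't w'i); rewrite -[RHS]sum0.
by apply: eq_bigr => k _ /=; case: unlift.
Qed.

Lemma refine_facet_normal (l w : V) : in_normal_cone l -> 0 < dotv l w ->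
  exists l', [/\ in_normal_cone l', 0 < dotv l' w & facet_normal R beta l'].
Proof.
move=> nl lw.
suff /(_ n.-1 (leqnn _)) [l' [t [nl' l'w l't indep_t]]] : forall r, (r <= n.-1)%N ->
    exists l' (t : 'I_r -> 'I_d), [/\ in_normal_cone l', 0 < dotv l' w,
      forall k, dotv l' (hb (t k)) = 0 & lin_indep (hb \o t)].
  exists l'; split=> //; split; last by exists t.
  by apply: contraTneq l'w => ->; rewrite dotv0l ltxx.
elim=> [|r IH] rn; first by exists l, (tnth [tuple]); split=> // [[]|c _ []].
have [l1 [t1 [nl1 l1w l1t indep_t1]]] := IH (ltnW rn).
exact: refine_step rn nl1 l1w l1t indep_t1.
Qed.

End FacetNormals.

Lemma split_lshift m1 m2 (i : 'I_m1) : fintype.split (lshift m2 i) = inl i.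
Proof. exact: (unsplitK (inl i)). Qed.

Lemma split_rshift m1 m2 (i : 'I_m2) : fintype.split (rshift m1 i) = inr i.
Proof. exact: (unsplitK (inr i)). Qed.

Lemma exists_pos_lower_bound (R : realType) (I : finType) (f : I -> R) :
  (forall i, 0 < f i) -> exists2 e, 0 < e & forall i, e <= f i.
Proof.
move=> f0; exists (\big[Num.min/1]_i f i) => [|i]; last by rewrite (bigD1 i) //= ge_min lexx.
by elim/big_ind: _ => // x y; rewrite lt_min => -> ->.
Qed.

Lemma exists_box_step (R : realType) (I : finType) (a b : I -> R) :
  (forall i, 0 <= a i <= 1) -> (forall i, (0 < b i -> a i < 1) /\ (b i < 0 -> 0 < a i)) ->
  exists2 e, 0 < e & forall i, 0 <= a i + e * b i <= 1.
Proof.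
move=> a01 ab.
pose room i := if 0 < b i then (1 - a i) / b i else if b i < 0 then a i / - b i else 1.
have room_gt0 i : 0 < room i.
  rewrite /room; have [bi|_] := ifPn; first by rewrite divr_gt0 ?subr_gt0 ?(ab i).1.
  by have [bi|//] := ifPn; rewrite divr_gt0 ?oppr_gt0 ?(ab i).2.
have [e e0 e_room] := exists_pos_lower_bound room_gt0.
exists e => // i; have := e_room i; have /andP[ai0 ai1] := a01 i; rewrite /room.
case: (ltrgt0P (b i)) => bi eb.
- have : (1 - a i) / b i * b i = 1 - a i by rewrite divfK // gt_eqF.
  by move=> E; apply/andP; split; nra.
- have : a i / - b i * b i = - a i by rewrite invrN mulrN mulNr divfK // lt_eqF.
  by move=> E; apply/andP; split; nra.
- by rewrite bi mulr0 addr0 ai0 ai1.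
Qed.

Section Separation.
Variables (R : realType) (n d : nat) (beta : 'I_d -> 'rV[int]_n).
Notation V := 'rV[R]_n.
Notation hb := (halfbeta R beta).
Notation supp := (supp_nabla R beta).
Notation Nabla := (Nabla R beta).
Hypothesis hb_ortho_eq0 : forall u : V, (forall i, dotv u (hb i) = 0) -> u = 0.

(* [x] lies in [Nabla] iff [(x, 1, ..., 1)] is a nonnegative combination of
   the vectors [(halfbeta i, e_i)] and [(0, e_i)]. *)
Definition box_gen (j : 'I_(d + d)) : 'rV[R]_(n + d) :=
  match fintype.split j with
  | inl i => row_mx (hb i) (delta_mx 0 i)
  | inr i => row_mx 0 (delta_mx 0 i)
  end.

Lemma nabla_of_box_cone x : in_cone box_gen (row_mx x (const_mx 1)) -> Nabla x.
Proof.
case=> c c0 cE; apply/nablaP; exists (fun i => c (lshift d i)); last first.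
  move/(congr1 lsubmx): cE; rewrite row_mxKl raddf_sum big_split_ord /= => ->.
  rewrite [X in _ + X]big1 ?addr0 => [|i _]; last first.
    by rewrite linearZ /= /box_gen split_rshift row_mxKl scaler0.
  by apply: eq_bigr => i _; rewrite linearZ /= /box_gen split_lshift row_mxKl.
move=> i; rewrite c0 /=; move/(congr1 rsubmx): cE.
rewrite row_mxKr raddf_sum big_split_ord /=.
under eq_bigr => k _ do rewrite linearZ /= /box_gen split_lshift row_mxKr.
under [X in _ + X]eq_bigr => k _ do rewrite linearZ /= /box_gen split_rshift row_mxKr.
move/(congr1 (fun v : 'rV[R]_d => v 0 i)); rewrite !mxE !summxE.
rewrite (bigD1 i) //= [X in _ + X](bigD1 i) //= !big1 ?addr0 => [|k ki|k ki].
- by rewrite !mxE !eqxx !mulr1 => ->; rewrite lerDl c0.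
- by rewrite !mxE eqxx eq_sym (negbTE ki) mulr0.
- by rewrite !mxE eqxx eq_sym (negbTE ki) mulr0.
Qed.

Lemma separate_nabla x : ~ Nabla x -> exists l, supp l < dotv l x.
Proof.
move=> Nx; have [|L [Lgen Lx]] := farkas (v := row_mx x (const_mx 1)) (g := box_gen).
  by move=> /nabla_of_box_cone.
exists (lsubmx L).
have Lr i : rsubmx L 0 i <= 0.
  have := Lgen (rshift d i).
  by rewrite /box_gen split_rshift dotv_row_mx dotv_delta_mx dotv0r add0r.
have Ll i : dotv (lsubmx L) (hb i) <= - rsubmx L 0 i.
  have := Lgen (lshift d i).
  by rewrite /box_gen split_lshift dotv_row_mx dotv_delta_mx -lerBrDr sub0r.
apply: (le_lt_trans (y := \sum_i - rsubmx L 0 i)).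
  by apply: ler_sum => i _; rewrite ge_max oppr_ge0 Lr Ll.
have Lsum : dotv (rsubmx L) (const_mx 1) = \sum_i rsubmx L 0 i.
  by rewrite dotvE; apply: eq_bigr => k _; rewrite mxE mul1r.
by move: Lx; rewrite dotv_row_mx Lsum sumrN; lra.
Qed.

Lemma separate_nabla_facet x : ~ Nabla x ->
  exists l, facet_normal R beta l /\ supp l < dotv l x.
Proof.
move=> /separate_nabla[l0 l0x].
pose up i := dotv l0 (hb i) <= 0; pose lo i := ~~ up i.
have up_or_lo i : up i || lo i by rewrite orbN.
pose a i : R := (lo i)%:R.
have dot_a l : in_normal_cone beta up lo l -> dotv l (\sum_i a i *: hb i) = supp l.
  move=> nl; apply: dotv_eq_supp => i; rewrite /a.
  - by case: (lo i); rewrite ?lexx ?ler01.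
  - case: (boolP (lo i)) => [|loi _]; first by rewrite ltxx.
    by apply: (nl i).1; move: (up_or_lo i); rewrite (negbTE loi) orbF.
  - by case: (boolP (lo i)) => [loi _|]; [exact: (nl i).2 | rewrite ltxx].
have nl0 : in_normal_cone beta up lo l0.
  by move=> i; split=> //; rewrite /lo /up -ltNge => /ltW.
have [|l [nl lw fl]] :=
  refine_facet_normal up_or_lo hb_ortho_eq0 (w := x - \sum_i a i *: hb i) nl0.
  by rewrite dotvBr dot_a // subr_gt0.
by exists l; split=> //; move: lw; rewrite dotvBr dot_a // subr_gt0.
Qed.

(* The directions in which the coefficients [a] of a point of [Nabla] can move. *)
Definition feasible_gen (a : 'I_d -> R) (j : 'I_(d + d)) : V :=
  match fintype.split j with
  | inl i => if a i < 1 then hb i else 0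
  | inr i => if 0 < a i then - hb i else 0
  end.

Lemma feasible_coef a v : in_cone (feasible_gen a) v ->
  exists2 b : 'I_d -> R, v = \sum_i b i *: hb i &
    forall i, (0 < b i -> a i < 1) /\ (b i < 0 -> 0 < a i).
Proof.
case=> c c0 ->.
pose bl i := if a i < 1 then c (lshift d i) else 0.
pose br i := if 0 < a i then c (rshift d i) else 0.
exists (fun i => bl i - br i).
  under [RHS]eq_bigr => i _ do rewrite scalerBl.
  rewrite big_split_ord sumrB -sumrN /=; congr (_ + _); apply: eq_bigr => i _.
    by rewrite /feasible_gen split_lshift /bl; case: ifP; rewrite ?scaler0 ?scale0r.
  rewrite /feasible_gen split_rshift /br.
  by case: ifP; rewrite ?scaler0 ?scale0r ?oppr0 ?scalerN.
move=> i; have := c0 (lshift d i); have := c0 (rshift d i); rewrite /bl /br.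
by case: (a i < 1); case: (0 < a i); split=> // h; exfalso; lra.
Qed.

Lemma exit_facet_normal q v : Nabla q -> (forall e, 0 < e -> ~ Nabla (q + e *: v)) ->
  exists l, [/\ facet_normal R beta l, dotv l q = supp l & 0 < dotv l v].
Proof.
case/nablaP=> a a01 qE no_exit.
have [/feasible_coef[b vE bsign]|nvc] := pselect (in_cone (feasible_gen a) v).
  have [e e0 ab01] := exists_box_step a01 bsign.
  case: (no_exit e e0); apply/nablaP; exists (fun i => a i + e * b i) => //.
  rewrite qE vE scaler_sumr -big_split; apply: eq_bigr => i _ /=.
  by rewrite [RHS]scalerDl (scalerA e).
have [l [lg lv]] := farkas nvc.
pose up i := a i < 1; pose lo i := 0 < a i.
have up_or_lo i : up i || lo i.
  by rewrite /up /lo; case: ltP => //= /(lt_le_trans ltr01).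
have nl : in_normal_cone beta up lo l.
  move=> i; rewrite /up /lo; split=> [ai1|ai0].
    by have := lg (lshift d i); rewrite /feasible_gen split_lshift ai1.
  by have := lg (rshift d i); rewrite /feasible_gen split_rshift ai0 dotvNr oppr_le0.
have [l' [nl' l'v fl']] := refine_facet_normal up_or_lo hb_ortho_eq0 nl lv.
exists l'; split=> //; rewrite qE; apply: dotv_eq_supp => // i.
  exact: (nl' i).1.
exact: (nl' i).2.
Qed.

End Separation.


Section Arrangement.
Variables (R : realType) (n d : nat) (beta : 'I_d -> 'rV[int]_n).
Notation V := 'rV[R]_n.
Notation hb := (halfbeta R beta).
Notation supp := (supp_nabla R beta).
Notation Nabla := (Nabla R beta).
Notation facet_normal := (facet_normal R beta).
Hypothesis sum_hb0 : \sum_i hb i = 0.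
Hypothesis hb_ortho_eq0 : forall u : V, (forall i, dotv u (hb i) = 0) -> u = 0.

Lemma supp_nablaZ_norm a l : supp (a *: l) = `|a| * supp l.
Proof.
have [a0|a0] := ler0P a; last by rewrite supp_nablaZ ?ltW.
by rewrite -supp_nablaZ ?oppr_ge0 // scaleNr supp_nablaN.
Qed.

Lemma facet_normalN l : facet_normal l -> facet_normal (- l).
Proof.
case=> l0 [t [lt indep_t]]; split; first by rewrite oppr_eq0.
by exists t; split=> // k; rewrite dotvNl lt oppr0.
Qed.

(* The facet of [chi + Nabla] with outer normal [- l]. *)
Lemma hypH_facet_normal l chi : facet_normal l -> in_lattice chi ->
  hypH R beta [set x | dotv l x = dotv l chi - supp l].
Proof.
move=> fl chiM; exists chi, [set x | dotv (- l) x = supp (- l)]; split=> //; split.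
  by exists (- l), (supp (- l)); rewrite oppr_eq0 fl.1.
split; first exact/facet_normal_facet/facet_normalN.
apply/seteqP; split=> x /=; rewrite translateP /= supp_nablaN // dotvNl dotvBr.
  by move=> ->; ring.
by move=> E; rewrite -E; ring.
Qed.

Lemma hypH_hyperplane B : hypH R beta B ->
  exists l c, l != 0 /\ B = [set x | dotv l x = c].
Proof.
case=> m [_ [_ [[l [c [l0 ->]]] [_ ->]]]]; exists l, (c + dotv l m); split=> //.
apply/seteqP; split=> x /=; rewrite translateP /= dotvBr.
  by move=> <-; rewrite subrK.
by move=> ->; rewrite addrK.
Qed.

Lemma face_translate_supp d0 l : is_face (translate d0 Nabla)
  ([set x | dotv l x = supp l + dotv l d0] `&` translate d0 Nabla).
Proof.
apply: face_supporting; first exact/convex_translate/convex_nabla.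
by move=> x /translateP /(dotv_le_supp l); rewrite dotvBr lerBlDr.
Qed.

Lemma extend_or_exit d0 x y : translate d0 Nabla x ->
  (exists2 e, 0 < e & translate d0 Nabla (x + e *: (x - y))) \/
  exists l, [/\ facet_normal l, dotv l (x - d0) = supp l & 0 < dotv l (x - y)].
Proof.
move=> /translateP Kx; have [ext|no_ext] := pselect (exists2 e, 0 < e &
  translate d0 Nabla (x + e *: (x - y))); [by left | right].
apply: exit_facet_normal Kx _ => // e e0 Ke; apply: no_ext; exists e => //.
by apply/translateP; rewrite addrAC.
Qed.

(* [f0 + e l] and [f0 - e l] cannot both lie in [d0 + Nabla], since then [F]
   would contain them. *)
Lemma face_in_facet d0 (F : set V) l c f0 : is_face (translate d0 Nabla) F -> l != 0 ->
  (forall f, F f -> dotv l f = c) -> F f0 ->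
  exists l', facet_normal l' /\ dotv l' (f0 - d0) = supp l'.
Proof.
move=> faceF l0 Fl Ff0; have Kf0 := faceF.1 _ Ff0.
have [[e1 e1_0 K1]|[l' [fl' l'f0 _]]] := extend_or_exit (f0 - l) Kf0; last by exists l'.
have [[e2 e2_0 K2]|[l' [fl' l'f0 _]]] := extend_or_exit (f0 + e1 *: l) Kf0; last by exists l'.
rewrite subKr in K1.
have /Fl := face_extend faceF e2_0 K1 K2 Ff0; rewrite dotvDr dotvZr Fl //.
by move/eqP; rewrite addrC -subr_eq0 addrK mulf_eq0 gt_eqF //= dotv_eq0 (negbTE l0).
Qed.

End Arrangement.

Section AdjacentChambers.
Variables (R : realType) (n d : nat) (beta : 'I_d -> 'rV[int]_n).
Notation V := 'rV[R]_n.
Notation hb := (halfbeta R beta).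
Notation supp := (supp_nabla R beta).
Notation Nabla := (Nabla R beta).
Notation facet_normal := (facet_normal R beta).
Notation C := (Cset R beta).
Hypothesis sum_hb0 : \sum_i hb i = 0.
Hypothesis hb_ortho_eq0 : forall u : V, (forall i, dotv u (hb i) = 0) -> u = 0.
Variables (delta delta' delta0 : V) (H F : set V).
Hypotheses (hd : avoids_H R beta delta) (hd' : avoids_H R beta delta') (hH : hypH R beta H).
Hypothesis hHuniq : forall B, hypH R beta B -> intersects (segment delta delta') B -> B = H.
Hypotheses (hd0 : segment delta delta' delta0) (hd0H : H delta0).
Hypotheses (hF : is_facet (translate delta0 Nabla) F) (hFpar : parallel F H).
Hypothesis hFmeet : intersects F (translate delta Nabla).
Notation K := (translate delta0 Nabla).

Lemma orient_H :
  exists lH cH, [/\ lH != 0, H = [set x | dotv lH x = cH] & cH < dotv lH delta].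
Proof.
have [l [c [l0 HE]]] := hypH_hyperplane hH.
case: (ltrgtP (dotv l delta) c) => [lt|gt|eq]; last by case: (hd hH); rewrite HE.
  exists (- l), (- c); split; rewrite ?oppr_eq0 ?dotvNl ?ltrN2 //.
  rewrite HE; apply/seteqP; split=> x /=; rewrite dotvNl; first by move=> ->.
  exact: oppr_inj.
by exists l, c.
Qed.

Variables (lH : V) (cH : R).
Hypotheses (lH0 : lH != 0) (HE : H = [set x | dotv lH x = cH]).
Hypothesis lH_delta : cH < dotv lH delta.

Lemma lH_delta0 : dotv lH delta0 = cH.
Proof. by move: hd0H; rewrite HE. Qed.

Lemma lH_delta' : dotv lH delta' < cH.
Proof.
have ne : dotv lH delta' != cH by apply/eqP => E; apply: (hd' hH); rewrite HE.
have [s /andP[s0 s1] E] := (segmentP _ _ _).1 hd0.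
have := lH_delta0; rewrite E dotvDr !dotvZr => e.
have s_gt0 : 0 < s.
  rewrite lt_def s0 andbT; apply: contraTneq lH_delta => s_eq0.
  by move: e; rewrite s_eq0 subr0 mul1r mul0r addr0 => ->; rewrite ltxx.
have A : 0 <= (1 - s) * (dotv lH delta - cH) by rewrite mulr_ge0 ?subr_ge0 // ltW.
by rewrite lt_neqAle ne -subr_le0 -(pmulr_rle0 _ s_gt0); nra.
Qed.

Lemma segment_H y : segment delta delta' y -> H y -> y = delta0.
Proof.
case/segmentP=> t _ ->; rewrite HE /= => ly.
have [s _ E] := (segmentP _ _ _).1 hd0.
have := lH_delta0; rewrite E; move: ly; rewrite !dotvDr !dotvZr => ly ls.
have : (t - s) * (dotv lH delta' - dotv lH delta) = 0 by rewrite mulrBl; lra.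
move/eqP; rewrite mulf_eq0 subr_eq0 => /orP[/eqP ->|]; first by rewrite -E.
rewrite subr_eq0 => /eqP E'; have := lH_delta'; rewrite E' => lt.
by have := lt_trans lt lH_delta; rewrite ltxx.
Qed.

Lemma hypH_segment B y : hypH R beta B -> B y -> segment delta delta' y ->
  B = H /\ y = delta0.
Proof.
move=> hB By y_seg; have BH : B = H by apply: hHuniq => //; exists y.
by split=> //; apply: segment_H; rewrite -?BH.
Qed.

Lemma parallel_lH l c : [set x | dotv l x = c] = H -> exists a, l = a *: lH.
Proof. by rewrite HE; apply: hyperplane_eq_normal. Qed.

(* This hyperplane of the family [hypH] separates [delta] from [z], so it
   crosses the segment from [delta] to [delta'] and is therefore [H]. *)
Lemma crossing_H l chi z : facet_normal l -> in_lattice chi -> segment delta delta' z ->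
  dotv l (chi - delta) <= supp l -> supp l < dotv l (chi - z) ->
  [set x | dotv l x = dotv l chi - supp l] = H /\ dotv l delta0 = dotv l chi - supp l.
Proof.
move=> fl chiM z_seg le lt.
have ld : dotv (- l) delta <= supp l - dotv l chi by move: le; rewrite dotvNl dotvBr; lra.
have lz : supp l - dotv l chi < dotv (- l) z by move: lt; rewrite dotvNl dotvBr; lra.
have [t t01 lc] := crossing ld lz.
have [|BH <-] :=
  hypH_segment (hypH_facet_normal sum_hb0 fl chiM) _ (segment_shrink z_seg t01).
  by rewrite /= -[dotv l _]opprK -dotvNl lc; ring.
by split=> //; rewrite /= -[dotv l _]opprK -dotvNl lc; ring.
Qed.

Lemma diff_in_K chi : C delta chi -> ~ C delta' chi -> K chi.
Proof.
move=> [/translateP Nd chiM] _; apply/translateP; apply: contrapT => NK.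
have [l [fl lt]] := separate_nabla_facet hb_ortho_eq0 NK.
have [_ E] := crossing_H fl chiM hd0 (dotv_le_supp l Nd) lt.
by move: lt; rewrite dotvBr E; lra.
Qed.

Lemma diff_on_top chi : C delta chi -> ~ C delta' chi -> dotv lH (chi - delta0) = supp lH.
Proof.
move=> [/translateP Nd chiM] nC'.
have NK' : ~ Nabla (chi - delta') by move=> N'; apply: nC'; split=> //; apply/translateP.
have [l [fl lt]] := separate_nabla_facet hb_ortho_eq0 NK'.
have [PH E] := crossing_H fl chiM (segment_end _ _) (dotv_le_supp l Nd) lt.
have [a la] := parallel_lH PH.
have a0 : 0 < a.
  have : a != 0 by apply: contraNneq fl.1 => a0; rewrite la a0 scale0r.
  have : dotv l delta0 <= dotv l delta by move: (dotv_le_supp l Nd); rewrite dotvBr E; lra.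
  rewrite la !dotvZl lH_delta0 lt_def eq_sym => + ->.
  by have := lH_delta; nra.
move: E; rewrite la !dotvZl supp_nablaZ ?ltW // dotvBr => E.
by apply: (mulfI (lt0r_neq0 a0)); rewrite mulrBr E; ring.
Qed.

Lemma lH_const_on_F : exists cF, forall f, F f -> dotv lH f = cF.
Proof.
case: hFpar => t Ft; exists (cH + dotv lH t) => f /Ft /translateP.
by rewrite HE /= dotvBr => <-; rewrite subrK.
Qed.

Lemma facet_relint : exists p f0,
  [/\ row_free (\matrix_(i < n.-1) (p (lift ord0 i) - p ord0)), forall i, F (p i),
       F f0 & forall G, is_face K G -> G f0 -> forall i, G (p i)].
Proof.
case: hF => -[FK [convF _]] [[p [pF p_free]] _].
exists p, (mid_chain (fun j => p (inord j)) n.-1); split=> //.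
  exact: mid_chain_in.
move=> G faceG Gf0 i; rewrite -[i in G (p i)]inord_val.
apply: mid_chain_face faceG Gf0 _ (leq_ord i).
  exact/convex_translate/convex_nabla.
by move=> j _; apply/FK.
Qed.

Variables (p : 'I_n.-1.+1 -> V) (f0 : V).
Hypotheses (p_free : row_free (\matrix_(i < n.-1) (p (lift ord0 i) - p ord0))).
Hypotheses (pF : forall i, F (p i)) (Ff0 : F f0).
Hypothesis f0_relint : forall G, is_face K G -> G f0 -> forall i, G (p i).

Lemma relint_normal l : facet_normal l -> dotv l (f0 - delta0) = supp l ->
  exists a, l = a *: lH.
Proof.
move=> fl lf0; have [cF lHF] := lH_const_on_F.
have Gf0 : ([set x | dotv l x = supp l + dotv l delta0] `&` K) f0.
  by split; [rewrite /= -lf0 dotvBr subrK | exact: hF.1.1].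
have lp i := (f0_relint (face_translate_supp _ _ _) Gf0 i).1.
exact: normal_of_affdim p_free lH0 (fun i => lHF _ (pF i)) lp.
Qed.

Lemma lH_on_F f : F f -> dotv lH f = dotv lH delta0 + supp lH.
Proof.
move=> Ff; have [cF lHF] := lH_const_on_F.
have [l [fl lf0]] := face_in_facet hb_ortho_eq0 hF.1 lH0 lHF Ff0.
have [a la] := relint_normal fl lf0.
move: lf0; rewrite la dotvZl supp_nablaZ_norm // dotvBr (lHF _ Ff0) -(lHF _ Ff).
case: ltrgt0P => a0 E.
- by apply: (mulfI (lt0r_neq0 a0)); rewrite mulrDr -E; ring.
- case: hFmeet => y [Fy /translateP Ny]; have := dotv_le_supp (- lH) Ny.
  rewrite supp_nablaN // dotvNl dotvBr (lHF _ Fy) -(lHF _ Ff).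
  have : dotv lH f - dotv lH delta0 = - supp lH.
    by apply: (mulfI (ltr0_neq0 a0)); rewrite E; ring.
  by have := lH_delta; rewrite -lH_delta0; lra.
- by case/eqP: fl.1; rewrite la a0 scale0r.
Qed.

Lemma CF_sub_diff chi : CFset R beta delta delta0 F chi -> (C delta `\` C delta') chi.
Proof.
move=> [Cd [_ [_ [Fchi _]]]]; split=> // -[/translateP Nd' _].
have := dotv_le_supp lH Nd'; rewrite dotvBr lH_on_F // lH_delta0.
by have := lH_delta'; lra.
Qed.

Section Difference.
Variable chi : V.
Hypotheses (Cd : C delta chi) (nCd' : ~ C delta' chi).

Lemma diff_in_F : F chi.
Proof.
have [[e e0 Ke]|[l [fl lf0 lpos]]] := extend_or_exit hb_ortho_eq0 chi (hF.1.1 _ Ff0).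
  exact: face_extend hF.1 e0 (diff_in_K Cd nCd') Ke Ff0.
have [a la] := relint_normal fl lf0.
have := diff_on_top Cd nCd'; move: lpos; rewrite la dotvZl !dotvBr (lH_on_F Ff0).
by move=> + E; rewrite -E subrKC subrr mulr0 ltxx.
Qed.

Lemma diff_face_min G : is_face K G -> G chi -> F `<=` G.
Proof.
move=> faceG Gchi f Ff.
have [[e e0 Ke]|[l [fl lchi lpos]]] := extend_or_exit hb_ortho_eq0 f (diff_in_K Cd nCd').
  exact: face_extend faceG e0 (hF.1.1 _ Ff) Ke Gchi.
have [|PH _] := hypH_segment (hypH_facet_normal sum_hb0 fl Cd.2) (y := delta0) _ hd0.
  by rewrite /= -lchi dotvBr; ring.
have [a la] := parallel_lH PH.
have := diff_on_top Cd nCd'; move: lpos; rewrite la dotvZl !dotvBr (lH_on_F Ff).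
by move=> + E; rewrite -E subrKC subrr mulr0 ltxx.
Qed.

Lemma diff_boundary : boundary K chi.
Proof.
split; first exact/subset_closure/(diff_in_K Cd nCd').
apply: (supp_point_not_interior (c := supp lH + dotv lH delta0) lH0).
  by move=> y /translateP /(dotv_le_supp lH); rewrite dotvBr lerBlDr.
by have := diff_on_top Cd nCd'; rewrite dotvBr; lra.
Qed.

Lemma diff_sub_CF : CFset R beta delta delta0 F chi.
Proof.
split=> //; split; first exact: diff_boundary.
by split; [exact: hF.1 | split; [exact: diff_in_F | exact: diff_face_min]].
Qed.

End Difference.

End AdjacentChambers.

Theorem lemma4p13 (R : realType) (n d : nat) (beta : 'I_d -> 'rV[int]_n)
  (hqs : quasi_symmetric R beta)
  (hspan : spans (Sigma R beta))
  (hgen : generic_nonempty R beta)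
  (delta delta' delta0 : 'rV[R]_n) (H F : set 'rV[R]_n)
  (hd : avoids_H R beta delta) (hd' : avoids_H R beta delta')
  (hH : hypH R beta H)
  (hHmeet : intersects (segment delta delta') H)
  (hHuniq : forall B, hypH R beta B -> intersects (segment delta delta') B -> B = H)
  (hd0 : segment delta delta' delta0) (hd0H : H delta0)
  (hF : is_facet (translate delta0 (Nabla R beta)) F)
  (hFpar : parallel F H)
  (hFmeet : intersects F (translate delta (Nabla R beta))) :
  CFset R beta delta delta0 F = Cset R beta delta `\` Cset R beta delta' /\
  Cset R beta delta `\` CFset R beta delta delta0 F = Cset R beta delta `&` Cset R beta delta'.
Proof.
have sum_hb0 := sum_halfbeta_eq0 hqs.
have hb_ortho_eq0 u := @halfbeta_ortho_eq0 R n d beta u hspan.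
have [lH [cH [lH0 HE lH_delta]]] := orient_H hd hH.
have [p [f0 [p_free pF Ff0 f0_relint]]] := facet_relint hF.
have CF_diff : CFset R beta delta delta0 F = Cset R beta delta `\` Cset R beta delta'.
  apply/seteqP; split=> chi.
    exact: (CF_sub_diff sum_hb0 hb_ortho_eq0 hd' hH hd0 hd0H hF hFpar hFmeet
             lH0 HE lH_delta p_free pF Ff0 f0_relint).
  case=> Cd nCd'.
  exact: (diff_sub_CF sum_hb0 hb_ortho_eq0 hd' hH hHuniq hd0 hd0H hF hFpar hFmeet
            lH0 HE lH_delta p_free pF Ff0 f0_relint Cd nCd').
by split=> //; rewrite CF_diff setDD.
Qed.
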